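(* Let $n\ge2$, let $A=[a_{kl}]$ be a real $n\times n$ matrix with zero diagonal and $f(\sigma)=\sum_{p=1}^{n-1}\sum_{q=p+1}^n a_{\sigma(p)\sigma(q)}$ its LOP objective function on $\Sigma_n$. For all $i,j\in\{1,\dots,n\}$, $$\frac{1}{(n-1)!}\sum_{\sigma:\sigma(i)=j}f(\sigma)=\frac{i-1}{n-1}\sum_{k\ne j}a_{kj}+\frac{n-i}{n-1}\sum_{k\ne j}a_{jk}+\frac12\sum_{\substack{k\ne l\\ k,l\ne j}}a_{kl}.$$
   Context: $\Sigma_n$ is the symmetric group on $\{1,\dots,n\}$; $\sigma(p)$ is the row/column index placed in position $p$, so $\sigma(i)=j$ means index $j$ is in position $i$. *)

(* Indices are 0-based: 'I_n = {0,...,n-1} stands for {1,...,n}. *)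
From mathcomp Require Import all_boot all_order all_algebra all_fingroup.
Set Implicit Arguments. Unset Strict Implicit. Unset Printing Implicit Defensive.
Import Order.TTheory GRing.Theory Num.Theory.
Local Open Scope ring_scope.

Definition lop_obj (R : nzRingType) (n : nat) (A : 'M[R]_n) (s : 'S_n) : R :=
  \sum_(p < n) \sum_(q < n | (p < q)%N) A (s p) (s q).

From mathcomp Require Import all_boot all_order all_algebra all_fingroup.
From mathcomp Require Import ring.
Set Implicit Arguments. Unset Strict Implicit. Unset Printing Implicit Defensive.
Import GRing.Theory Num.Theory.
Local Open Scope ring_scope.

(* Write T(p, q) for the sum of a_{σ(p)σ(q)} over the permutations σ with
   σ(i) = j.  Composing with a permutation that fixes the position i permutes
   these σ, so T is invariant under such relabellings of positions: T(i, q) is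
   the same for all q ≠ i, T(p, i) the same for all p ≠ i, and T is symmetric
   away from i.  Summing over q ≠ i gives (n-1) T(i, q) = (n-1)! Σ_{k≠j} a_{jk},
   likewise (n-1) T(p, i) = (n-1)! Σ_{k≠j} a_{kj}, and the sum of T over all
   pairs of positions different from i is (n-1)! Σ_{k,l≠j} a_{kl}.  The
   objective sums T over p < q: the n-i pairs with p = i and the i-1 pairs with
   q = i give the first two terms, and by symmetry the remaining pairs give
   half of the last total. *)

Lemma sumr_const_ord_gt (V : nmodType) (n : nat) (i : 'I_n) (x : V) :
  \sum_(q < n | (i < q)%N) x = x *+ (n - 1 - i).
Proof.
rewrite (eq_bigl (fun q : 'I_n => predT q && (i.+1 <= q)%N)) //.
by rewrite -(big_geq_mkord i.+1 n predT (fun=> x)) sumr_const_nat -subnDA.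
Qed.

Lemma sumr_const_ord_lt (V : nmodType) (n : nat) (i : 'I_n) (x : V) :
  \sum_(p < n | (p < i)%N) x = x *+ i.
Proof.
by rewrite (big_ord_narrow (ltnW (ltn_ord i))) sumr_const card_ord.
Qed.

Lemma reindex_perm_neq (V : nmodType) (n : nat) (s : 'S_n) (i : 'I_n)
    (F : 'I_n -> V) :
  \sum_(p | p != i) F (s p) = \sum_(k | k != s i) F k.
Proof.
rewrite [RHS](reindex_inj (@perm_inj _ s)).
by apply: eq_bigl => p; rewrite (inj_eq perm_inj).
Qed.

Lemma sum_lt_bigD1 (V : nmodType) (n : nat) (i : 'I_n) (F : 'I_n -> 'I_n -> V) :
  \sum_(p : 'I_n) \sum_(q : 'I_n | (p < q)%N) F p q
  = \sum_(q : 'I_n | (i < q)%N) F i q + \sum_(p : 'I_n | (p < i)%N) F p i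
    + \sum_(p | p != i) \sum_(q : 'I_n | (p < q)%N && (q != i)) F p q.
Proof.
rewrite (bigD1 i) //= -addrA; congr (_ + _).
rewrite (eq_bigr (fun p : 'I_n => \sum_(q : 'I_n | (p < q)%N && (q == i)) F p q
                         + \sum_(q : 'I_n | (p < q)%N && (q != i)) F p q)); last first.
  by move=> p _; apply: bigID.
rewrite big_split /=; congr (_ + _).
under eq_bigr do rewrite big_mkcondl big_pred1_eq.
rewrite -big_mkcondr; apply: eq_bigl => p.
by apply/andb_idl => lt_pi; rewrite neq_ltn lt_pi.
Qed.

Lemma sum_lt_sym (V : nmodType) (n : nat) (P : pred 'I_n) (F : 'I_n -> 'I_n -> V) :
    (forall p q, P p -> P q -> F p q = F q p) -> (forall p, P p -> F p p = 0) ->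
  (\sum_(p | P p) \sum_(q : 'I_n | (p < q)%N && P q) F p q) *+ 2
  = \sum_(p | P p) \sum_(q | P q) F p q.
Proof.
move=> F_sym F_diag0.
have lt_gt : \sum_(p | P p) \sum_(q : 'I_n | (p < q)%N && P q) F p q
             = \sum_(p | P p) \sum_(q : 'I_n | (q < p)%N && P q) F p q.
  rewrite (exchange_big_dep P) => [|p q _ /andP[]] //=.
  apply: eq_bigr => p Pp; apply: eq_big => [q|q /andP[Pq _]].
    by rewrite Pp andbT andbC.
  exact: F_sym.
rewrite mulr2n {2}lt_gt -big_split /=; apply: eq_bigr => p Pp.
rewrite [RHS](bigID (fun q : 'I_n => (p < q)%N)) /= [X in _ = _ + X](bigD1 p) ?Pp ?ltnn //=.
rewrite F_diag0 // add0r; congr (_ + _); apply: eq_bigl => q.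
  by rewrite andbC.
by rewrite -leqNgt ltn_neqAle; case: (P q); rewrite ?andbT ?andbF // andbC.
Qed.

Lemma sum_neq_offdiag (V : nmodType) (n : nat) (A : 'M[V]_n) (j : 'I_n) :
    (forall k, A k k = 0) ->
  \sum_(k | k != j) \sum_(l | l != j) A k l
  = \sum_k \sum_(l | [&& k != l, k != j & l != j]) A k l.
Proof.
move=> A_diag0; rewrite [RHS](bigD1 j) //= [X in _ = X + _]big_pred0 => [|l]; last first.
  by rewrite eqxx /= andbF.
rewrite add0r; apply: eq_bigr => k kj; rewrite (bigID (pred1 k)) /=.
rewrite big1 => [|l /andP[_ /eqP ->]]; last exact: A_diag0.
by rewrite add0r; apply: eq_bigl => l; rewrite kj andbC eq_sym.
Qed.

Lemma card_perm_fiber (n : nat) (i j : 'I_n) : #|[pred s : 'S_n | s i == j]| = n.-1`!.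
Proof.
have card_fiber j' : #|[pred s : 'S_n | s i == j']| = #|[pred s : 'S_n | s i == j]|.
  rewrite -!sum1_card (reindex_inj (mulIg (tperm j j'))) /=.
  by apply: eq_bigl => s; rewrite !inE permM (canF_eq (tpermK j j')) tpermR.
have : n`! = (n * #|[pred s : 'S_n | s i == j]|)%N.
  rewrite -card_Sn -sum1_card (partition_big (fun s : 'S_n => s i) predT) //=.
  under eq_bigr => k _ do rewrite sum1_card card_fiber.
  by rewrite sum_nat_const card_ord.
case: n i j card_fiber => [[] //|n] i j _.
by rewrite factS => /eqP; rewrite eqn_mul2l /= => /eqP <-.
Qed.

Section PositionFiber.

Variables (R : nzRingType) (n : nat) (A : 'M[R]_n) (i j : 'I_n).

Definition fiber_sum (p q : 'I_n) : R := \sum_(s : 'S_n | s i == j) A (s p) (s q).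

Lemma fiber_sum_perm (t : 'S_n) (p q : 'I_n) :
  t i = i -> fiber_sum (t p) (t q) = fiber_sum p q.
Proof.
move=> ti; rewrite /fiber_sum [RHS](reindex_inj (mulgI t)) /=.
by apply: eq_big => [s|s _]; rewrite !permM ?ti.
Qed.

Lemma fiber_sum_sym (p q : 'I_n) : p != i -> q != i -> fiber_sum p q = fiber_sum q p.
Proof.
move=> pi qi; have := @fiber_sum_perm (tperm p q) p q (tpermD pi qi).
by rewrite tpermL tpermR.
Qed.

Lemma fiber_sum_row (q : 'I_n) :
  q != i -> fiber_sum i q *+ n.-1
            = (\sum_(k | k != j) A j k) *+ #|[pred s : 'S_n | s i == j]|.
Proof.
move=> qi; transitivity (\sum_(q' | q' != i) fiber_sum i q').
  rewrite -[n in n.-1]card_ord -(cardC1 i) -sumr_const; apply: eq_big => // q' q'i.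
  have := @fiber_sum_perm (tperm q q') i q (tpermD qi q'i).
  by rewrite tpermD // tpermL.
rewrite /fiber_sum exchange_big -sumr_const; apply: eq_big => [s|s /eqP si] //=.
by rewrite -si -reindex_perm_neq.
Qed.

Lemma fiber_sum_offdiag :
  \sum_(p | p != i) \sum_(q | q != i) fiber_sum p q
  = (\sum_(k | k != j) \sum_(l | l != j) A k l) *+ #|[pred s : 'S_n | s i == j]|.
Proof.
rewrite /fiber_sum; under eq_bigr do rewrite exchange_big /=.
rewrite exchange_big -sumr_const; apply: eq_big => [s|s /eqP si] //=.
rewrite -si -reindex_perm_neq; apply: eq_bigr => p _.
by rewrite -reindex_perm_neq.
Qed.

End PositionFiber.

Lemma fiber_sum_tr (R : nzRingType) (n : nat) (A : 'M[R]_n) (i j p q : 'I_n) :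
  fiber_sum A^T i j p q = fiber_sum A i j q p.
Proof. by apply: eq_bigr => s _; rewrite mxE. Qed.

Lemma fiber_sum_col (R : nzRingType) (n : nat) (A : 'M[R]_n) (i j p : 'I_n) :
  p != i -> fiber_sum A i j p i *+ n.-1
            = (\sum_(k | k != j) A k j) *+ #|[pred s : 'S_n | s i == j]|.
Proof.
move=> pi; rewrite -fiber_sum_tr fiber_sum_row //.
by congr (_ *+ _); apply: eq_bigr => k _; rewrite mxE.
Qed.

Lemma sum_lop_obj_fiber (R : nzRingType) (n : nat) (A : 'M[R]_n) (i j : 'I_n) :
  \sum_(s : 'S_n | s i == j) lop_obj A s
  = \sum_(q : 'I_n | (i < q)%N) fiber_sum A i j i q
    + \sum_(p : 'I_n | (p < i)%N) fiber_sum A i j p i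
    + \sum_(p | p != i) \sum_(q : 'I_n | (p < q)%N && (q != i)) fiber_sum A i j p q.
Proof.
rewrite -sum_lt_bigD1 /lop_obj exchange_big /=; apply: eq_bigr => p _.
by rewrite exchange_big.
Qed.

Section FiberSumTotals.

Variables (R : nzRingType) (n : nat) (A : 'M[R]_n) (i j : 'I_n).

Lemma sum_fiber_sum_row :
  (\sum_(q : 'I_n | (i < q)%N) fiber_sum A i j i q) *+ n.-1
  = (\sum_(k | k != j) A j k) *+ (n.-1)`! *+ (n - 1 - i).
Proof.
rewrite -sumrMnl -(card_perm_fiber i j) -sumr_const_ord_gt; apply: eq_bigr => q iq.
by apply: fiber_sum_row; rewrite neq_ltn iq orbT.
Qed.

Lemma sum_fiber_sum_col :
  (\sum_(p : 'I_n | (p < i)%N) fiber_sum A i j p i) *+ n.-1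
  = (\sum_(k | k != j) A k j) *+ (n.-1)`! *+ i.
Proof.
rewrite -sumrMnl -(card_perm_fiber i j) -sumr_const_ord_lt; apply: eq_bigr => p pi.
by apply: fiber_sum_col; rewrite neq_ltn pi.
Qed.

Hypothesis A_diag0 : forall k, A k k = 0.

Lemma sum_fiber_sum_offdiag :
  (\sum_(p | p != i) \sum_(q : 'I_n | (p < q)%N && (q != i)) fiber_sum A i j p q) *+ 2
  = (\sum_(k | k != j) \sum_(l | l != j) A k l) *+ (n.-1)`!.
Proof.
rewrite (sum_lt_sym (P := fun q => q != i)) => [|p q pi qi|p _].
- by rewrite fiber_sum_offdiag card_perm_fiber.
- exact: fiber_sum_sym.
- by apply: big1 => s _; rewrite A_diag0.
Qed.

End FiberSumTotals.


Theorem proposition8 (R : realFieldType) (n : nat) (A : 'M[R]_n)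
    (hn : (2 <= n)%N) (hdiag : forall k : 'I_n, A k k = 0) (i j : 'I_n) :
  ((n.-1)`!)%:R^-1 * \sum_(s : 'S_n | s i == j) lop_obj A s
  = (i%:R / (n.-1)%:R) * \sum_(k < n | k != j) A k j
    + ((n - 1 - i)%:R / (n.-1)%:R) * \sum_(k < n | k != j) A j k
    + 2^-1 * \sum_(k < n) \sum_(l < n | [&& k != l, k != j & l != j]) A k l.
Proof.
have n1_neq0 : (n.-1)%:R != 0 :> R by rewrite pnatr_eq0 -lt0n -ltnS prednK // ltnW.
have fact_neq0 : ((n.-1)`!)%:R != 0 :> R by rewrite pnatr_eq0 -lt0n fact_gt0.
have two_neq0 : 2 != 0 :> R by rewrite pnatr_eq0.
have := sum_fiber_sum_row A i j; have := sum_fiber_sum_col A i j.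
have := sum_fiber_sum_offdiag i j hdiag.
rewrite sum_lop_obj_fiber -sum_neq_offdiag //.
move=> /(etrans (mulr_natr _ _)) /(canRL (mulfK two_neq0)) ->.
move=> /(etrans (mulr_natr _ _)) /(canRL (mulfK n1_neq0)) ->.
move=> /(etrans (mulr_natr _ _)) /(canRL (mulfK n1_neq0)) ->.
by field; rewrite n1_neq0 fact_neq0.
Qed.
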